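(* Consider the problem $\min_{x\in\mathbb{R}^n} F(x):=f(x)+g(x)$ subject to $Ax=b$, under the setting described in the context, and let $\lambda^*$ be an optimal solution of $\max_{\lambda\in\mathbb{R}^m} d(\lambda)$. Let $\{x^k\}$ and $\{\lambda^k\}$ be generated by the IAL framework described in the context, with a nonnegative tolerance sequence $\{\eta_k\}$ satisfying $\sum_{k=1}^{+\infty}\eta_k<+\infty$. Then $$\delta_k:=d(\lambda^* )-d(\lambda^k)\to 0 \quad\text{and}\quad \|Ax^{k+1}-b\|\to 0 \quad (k\to\infty).$$
   Context: Let $A\in\mathbb{R}^{m\times n}$ and $b\in\mathbb{R}^m$. Let $f:\mathbb{R}^n\to\mathbb{R}$ be convex and differentiable with Lipschitz continuous gradient. Let $g:\mathbb{R}^n\to\mathbb{R}\cup\{+\infty\}$ be a closed proper convex (possibly nonsmooth) function with bounded domain. Fix a penalty parameter $\beta>0$. For $\lambda\in\mathbb{R}^m$, define $$\hat f_\beta(x;\lambda):=f(x)+\langle\lambda,Ax-b\rangle+\tfrac{\beta}{2}\|Ax-b\|^2,\qquad \mathcal{L}_\beta(x;\lambda):=\hat f_\beta(x;\lambda)+g(x),$$ and $d(\lambda):=\min_{x\in\mathbb{R}^n}\mathcal{L}_\beta(x;\lambda)$. Here $\nabla\hat f_\beta(x;\lambda)$ denotes the gradient of $\hat f_\beta$ with respect to $x$. IAL framework: choose $x^1\in\operatorname{dom} g$, $\lambda^1\in\mathbb{R}^m$, and a nonnegative sequence $\{\eta_k\}$. For $k=1,2,\dots$: find a point $x^{k+1}$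 such that $$\max_{x\in\mathbb{R}^n}\Big\{\langle\nabla\hat f_\beta(x^{k+1};\lambda^k),\,x^{k+1}-x\rangle+g(x^{k+1})-g(x)\Big\}\le\eta_k,$$ and then set $\lambda^{k+1}=\lambda^k+\beta(Ax^{k+1}-b)$. The result holds for any sequences produced in this way. *)

From HB Require Import structures.
From mathcomp Require Import all_boot all_order all_algebra.
From mathcomp Require Import all_classical all_reals all_analysis.
Set Implicit Arguments. Unset Strict Implicit. Unset Printing Implicit Defensive.
Import Order.TTheory GRing.Theory Num.Theory.
Import numFieldNormedType.Exports.
Local Open Scope classical_set_scope.
Local Open Scope ring_scope.

Section Defs.
Variable R : realType.

Definition dotv (n : nat) (u v : 'cV[R]_n) : R := \sum_(i < n) u i 0 * v i 0.
Definition enorm (n : nat) (v : 'cV[R]_n) : R := Num.sqrt (dotv v v).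

Definition is_gradient (n : nat) (h : 'cV[R]_n -> R) (G : 'cV[R]_n -> 'cV[R]_n) :=
  forall x, differentiable h x /\ forall v, ('d h x : 'cV[R]_n -> R) v = dotv (G x) v.

Definition lipschitz_map (n : nat) (G : 'cV[R]_n -> 'cV[R]_n) :=
  exists Lc : R, forall x y, enorm (G x - G y) <= Lc * enorm (x - y).

Definition convex_fun (n : nat) (f : 'cV[R]_n -> R) :=
  forall (x y : 'cV[R]_n) (t : R), 0 <= t <= 1 ->
    f (t *: x + (1 - t) *: y) <= t * f x + (1 - t) * f y.

(* extended-valued convexity (g never takes -oo here) *)
Definition convex_efun (n : nat) (g : 'cV[R]_n -> \bar R) :=
  forall (x y : 'cV[R]_n) (t : R), 0 <= t <= 1 ->
    (g (t *: x + (1 - t) *: y)%R <= t%:E * g x + (1 - t)%:E * g y)%E.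

Definition proper_efun (n : nat) (g : 'cV[R]_n -> \bar R) :=
  (forall x, g x != -oo%E) /\ exists x, (g x < +oo)%E.

(* closed = lower semicontinuous *)
Definition lsc_efun (n : nat) (g : 'cV[R]_n -> \bar R) :=
  forall x (a : R), (a%:E < g x)%E -> \forall y \near x, (a%:E < g y)%E.

Definition bounded_dom (n : nat) (g : 'cV[R]_n -> \bar R) :=
  exists M : R, forall x, (g x < +oo)%E -> enorm x <= M.

Definition hatf (m n : nat) (f : 'cV[R]_n -> R) (A : 'M[R]_(m, n)) (b : 'cV[R]_m)
  (beta : R) (lam : 'cV[R]_m) (x : 'cV[R]_n) : R :=
  f x + dotv lam (A *m x - b) + beta / 2 * enorm (A *m x - b) ^+ 2.

Definition augL (m n : nat) (f : 'cV[R]_n -> R) (g : 'cV[R]_n -> \bar R)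
  (A : 'M[R]_(m, n)) (b : 'cV[R]_m) (beta : R) (lam : 'cV[R]_m) (x : 'cV[R]_n)
  : \bar R := ((hatf f A b beta lam x)%:E + g x)%E.

(* d(lam) = min_x L_beta(x; lam), written as the infimum (attained under the
   standing assumptions). *)
Definition dualf (m n : nat) (f : 'cV[R]_n -> R) (g : 'cV[R]_n -> \bar R)
  (A : 'M[R]_(m, n)) (b : 'cV[R]_m) (beta : R) (lam : 'cV[R]_m) : \bar R :=
  ereal_inf [set augL f g A b beta lam x | x in [set: 'cV[R]_n]].
End Defs.

From HB Require Import structures.
From mathcomp Require Import all_boot all_order all_algebra.
From mathcomp Require Import all_classical all_reals all_analysis.
From mathcomp Require Import ring lra.
Import Order.TTheory GRing.Theory Num.Theory.
Import numFieldNormedType.Exports.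
Local Open Scope classical_set_scope.
Local Open Scope ring_scope.

(* Write [r_k = A x^{k+1} - b] and [L_k = L_beta(x^{k+1}; lambda^k)].  The
   gradient inequality for [hatf] (strongly convex along the range of [A])
   and the [eta_k]-optimality of [x^{k+1}] give, for every [mu],
     L_k - eta_k + <mu - lambda^k, r_k> - |mu - lambda^k|^2 / (2 beta) <= d(mu)
                                          <= L_k + <mu - lambda^k, r_k>.
   Taking [mu = lambda^{k+1} = lambda^k + beta r_k] in the lower bound yields
   the ascent inequality  beta/2 |r_k|^2 <= d(lambda^{k+1}) - d(lambda^k) + eta_k
   and, combined with the upper bound at [mu = lambda^*],
     delta_{k+1} <= (|lambda^k - lambda^*|^2 - |lambda^{k+1} - lambda^*|^2) / (2 beta) + eta_k.
   Telescoping makes [delta_k] summable, so [delta_k -> 0], and then the ascent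
   inequality forces [r_k -> 0].  The Lipschitz gradient, closedness and
   bounded domain of [g] only guarantee that the subproblems are solvable:
   the argument does not use them. *)

Section InnerProduct.
Context {R : realType} {k : nat}.
Implicit Types (u v w : 'cV[R]_k) (a : R).

Lemma dotvC u v : dotv u v = dotv v u.
Proof. by apply: eq_bigr => i _; rewrite mulrC. Qed.

Lemma dotvDl u w v : dotv (u + w) v = dotv u v + dotv w v.
Proof. by rewrite /dotv -big_split; apply: eq_bigr => i _; rewrite !mxE mulrDl. Qed.

Lemma dotvZl a u v : dotv (a *: u) v = a * dotv u v.
Proof. by rewrite /dotv mulr_sumr; apply: eq_bigr => i _; rewrite !mxE mulrA. Qed.

Lemma dotv0l v : dotv 0 v = 0.
Proof. by rewrite -(scale0r (0 : 'cV[R]_k)) dotvZl mul0r. Qed.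

Lemma dotvNl u v : dotv (- u) v = - dotv u v.
Proof. by rewrite -scaleN1r dotvZl mulN1r. Qed.

Lemma dotvBl u w v : dotv (u - w) v = dotv u v - dotv w v.
Proof. by rewrite dotvDl dotvNl. Qed.

Lemma dotvDr u w v : dotv v (u + w) = dotv v u + dotv v w.
Proof. by rewrite !(dotvC v) dotvDl. Qed.

Lemma dotvZr a u v : dotv v (a *: u) = a * dotv v u.
Proof. by rewrite !(dotvC v) dotvZl. Qed.

Lemma dotvNr u v : dotv v (- u) = - dotv v u.
Proof. by rewrite !(dotvC v) dotvNl. Qed.

Lemma dotvv_ge0 u : 0 <= dotv u u.
Proof. by apply: sumr_ge0 => i _; rewrite -expr2 sqr_ge0. Qed.

Lemma enorm_sqr u : enorm u ^+ 2 = dotv u u.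
Proof. by rewrite /enorm sqr_sqrtr // dotvv_ge0. Qed.

Lemma dotv_ge_neg_sqr (beta : R) w u : 0 < beta ->
  - (dotv w w / (2 * beta)) <= dotv w u + beta / 2 * dotv u u.
Proof.
move=> beta_gt0; have := dotvv_ge0 (beta *: u + w).
rewrite !(dotvDl, dotvDr, dotvZl, dotvZr) (dotvC u w) => sq_ge0.
have -> : dotv w u + beta / 2 * dotv u u
        = (beta * (beta * dotv u u) + 2 * beta * dotv w u) / (2 * beta).
  by field; lra.
by rewrite -mulNr ler_pM2r; [lra | rewrite invr_gt0; lra].
Qed.

Lemma dotv_sqr_update (beta : R) w u : 0 < beta ->
  (dotv w w - dotv (w + beta *: u) (w + beta *: u)) / (2 * beta)
  = - dotv w u - beta / 2 * dotv u u.
Proof.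
move=> beta_gt0; rewrite dotvDl !dotvDr !dotvZl !dotvZr (dotvC u w).
by field; lra.
Qed.

End InnerProduct.

Lemma differential_le_of_segment_bound {R : realType} {k : nat}
    (h : 'cV[R]_k -> R) (G x v : 'cV[R]_k) (B c : R) :
  differentiable h x -> ('d h x : 'cV[R]_k -> R) v = dotv G v ->
  (forall t, 0 < t < 1 -> h (x + t *: v) <= h x + t * B - t * (1 - t) * c) ->
  dotv G v <= B - c.
Proof.
move=> hx dhx seg.
have quot : (fun t : R => t^-1 *: ((h \o shift x) (t *: v) - h x)) @ 0^' --> 'D_v h x.
  exact: diff_derivable.
rewrite -dhx -deriveE //.
have right_sub : (0 : R)^'+ --> (0 : R)^'.
  by move=> P [e e_gt0 HP]; exists e => // y ? y_gt0; apply: HP; rewrite ?gt_eqF.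
have tc : (fun t : R => t * c) @ 0^'+ --> 0 * c.
  by apply: cvgM; [apply: cvg_at_right_filter; exact: cvg_id | exact: cvg_cst].
have := cvgB (cvg_trans (cvg_app _ right_sub) quot) tc.
rewrite mul0r subr0 => quot_c.
apply: (cvgr_to_le (quot_c _)).
near=> t.
have t_gt0 : 0 < t by near: t; exact: nbhs_right_gt.
have t_lt1 : t < 1 by near: t; apply: nbhs_right_lt; exact: ltr01.
have := seg t; rewrite t_gt0 t_lt1 => /(_ isT) seg_t.
change (t^-1 * (h (t *: v + x) - h x) - t * c <= B - c).
rewrite [t *: v + x]addrC.
suff : t^-1 * (h (x + t *: v) - h x) <= B - (1 - t) * c by lra.
by rewrite mulrC ler_pdivrMr //; nra.
Unshelve. all: by end_near.
Qed.

Section SmoothPart.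
Context {R : realType} {m n : nat}.
Variables (f : 'cV[R]_n -> R) (A : 'M[R]_(m, n)).
Variables (b : 'cV[R]_m) (beta : R).
Hypothesis f_convex : convex_fun f.
Local Notation h := (hatf f A b beta).

Lemma hatf_shift_lam (mu l : 'cV[R]_m) z : h mu z = h l z + dotv (mu - l) (A *m z - b).
Proof. by rewrite /hatf dotvBl; ring. Qed.

Lemma hatf_segment_le l (x0 z : 'cV[R]_n) (t : R) : 0 < t < 1 ->
  h l (x0 + t *: (z - x0)) <= h l x0 + t * (h l z - h l x0)
    - t * (1 - t) * (beta / 2 * dotv (A *m (z - x0)) (A *m (z - x0))).
Proof.
move=> /andP[t_gt0 t_lt1].
set v := z - x0; set w := A *m x0 - b; set u := A *m v.
have ez : z = x0 + v by rewrite /v addrC subrK.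
have res_t : A *m (x0 + t *: v) - b = w + t *: u by rewrite mulmxDr scalemxAr addrAC.
have res_z : A *m z - b = w + u by rewrite ez mulmxDr addrAC.
have f_seg : f (x0 + t *: v) <= t * f z + (1 - t) * f x0.
  have -> : x0 + t *: v = t *: z + (1 - t) *: x0.
    by apply/matrixP => i j; rewrite !mxE; ring.
  by apply: f_convex; rewrite !ltW.
rewrite /hatf !enorm_sqr res_t res_z.
rewrite !(dotvDl, dotvDr, dotvZl, dotvZr) ?(dotvC u w).
nra.
Qed.

Lemma hatf_gradient_ineq l {G : 'cV[R]_n -> 'cV[R]_n} (x0 z : 'cV[R]_n) :
  is_gradient (h l) G ->
  h l x0 + dotv (G x0) (z - x0) + beta / 2 * dotv (A *m (z - x0)) (A *m (z - x0))
  <= h l z.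
Proof.
move=> /(_ x0) [hx dhx].
have := differential_le_of_segment_bound _ _ _ _ _ _ hx (dhx _) (hatf_segment_le l x0 z).
lra.
Qed.

Lemma hatf_inexact_min_lower_bound l mu (G : 'cV[R]_n -> 'cV[R]_n)
    (xp z : 'cV[R]_n) (gp gz e : R) :
  0 < beta -> is_gradient (h l) G ->
  dotv (G xp) (xp - z) + gp - gz <= e ->
  h l xp + gp - e + dotv (mu - l) (A *m xp - b)
    - dotv (mu - l) (mu - l) / (2 * beta) <= h mu z + gz.
Proof.
move=> beta_gt0 gradG inexact.
have grad_ineq := hatf_gradient_ineq l xp z gradG.
have young := dotv_ge_neg_sqr beta (mu - l) (A *m (z - xp)) beta_gt0.
have res_z : A *m z - b = (A *m xp - b) + A *m (z - xp).
  by rewrite mulmxBr [RHS]addrC addrA subrK.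
have flip : dotv (G xp) (xp - z) = - dotv (G xp) (z - xp) by rewrite -dotvNr opprB.
rewrite (hatf_shift_lam mu l) res_z (dotvDr (A *m xp - b)).
lra.
Qed.

End SmoothPart.

Section IALIterates.
Context {R : realType} {m n : nat}.
Context {A : 'M[R]_(m, n)} {b : 'cV[R]_m} {f : 'cV[R]_n -> R}.
Context {g : 'cV[R]_n -> \bar R} {beta : R} {Ghat : 'cV[R]_m -> 'cV[R]_n -> 'cV[R]_n}.
Context {x : nat -> 'cV[R]_n} {lam : nat -> 'cV[R]_m} {eta : nat -> R}.
Hypotheses (f_convex : convex_fun f) (g_proper : proper_efun g) (beta_gt0 : 0 < beta).
Hypothesis Ghat_grad : forall l, is_gradient (hatf f A b beta l) (Ghat l).
Hypothesis x_inexact : forall k, (1 <= k)%N -> forall z,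
  ((dotv (Ghat (lam k) (x k.+1)) (x k.+1 - z))%:E + g (x k.+1) - g z <= (eta k)%:E)%E.
Hypothesis lam_update : forall k, (1 <= k)%N -> lam k.+1 = lam k + beta *: (A *m x k.+1 - b).

Local Notation d := (dualf f g A b beta).
Local Notation D mu := (fine (d mu)).
Local Notation res k := (A *m x k.+1 - b).
Local Notation gx k := (fine (g (x k.+1))).
Local Notation L k := (hatf f A b beta (lam k) (x k.+1) + gx k).

Lemma g_iterate_fin k : (1 <= k)%N -> g (x k.+1) \is a fin_num.
Proof.
case: g_proper => g_nNy [z0 gz0_lty] k_ge1; have := x_inexact k k_ge1 z0.
have := g_nNy (x k.+1); have := g_nNy z0.
by case: (g z0) gz0_lty => [s| |] //; case: (g (x k.+1)).
Qed.

Lemma dualf_ge_iterate k mu : (1 <= k)%N ->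
  ((L k - eta k + dotv (mu - lam k) (res k)
     - dotv (mu - lam k) (mu - lam k) / (2 * beta))%:E <= d mu)%E.
Proof.
move=> k_ge1; apply: le_ereal_inf_tmp => _ [z _ <-]; rewrite /augL.
case: g_proper => g_nNy _; case gzE : (g z) => [gz| |].
- rewrite -EFinD lee_fin.
  apply: hatf_inexact_min_lower_bound (Ghat_grad (lam k)) _ => //.
  have := x_inexact k k_ge1 z.
  by rewrite gzE -[g (x k.+1)](fineK (g_iterate_fin k k_ge1)) -EFinD lee_fin.
- by rewrite addey // leey.
- by have := g_nNy z; rewrite gzE.
Qed.

Lemma dualf_le_iterate k mu : (1 <= k)%N ->
  (d mu <= (L k + dotv (mu - lam k) (res k))%:E)%E.
Proof.
move=> k_ge1; apply: ereal_inf_lbound; exists (x k.+1) => //.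
rewrite /augL (hatf_shift_lam f A b beta mu (lam k)).
by rewrite -(fineK (g_iterate_fin k k_ge1)) -EFinD; congr (_%:E); ring.
Qed.

Lemma dualf_fin mu : d mu \is a fin_num.
Proof.
rewrite fin_numElt; apply/andP; split.
  exact: lt_le_trans (ltNyr _) (dualf_ge_iterate 1 mu isT).
exact: le_lt_trans (dualf_le_iterate 1 mu isT) (ltry _).
Qed.

Lemma dual_ge_next k : (1 <= k)%N ->
  L k - eta k + beta / 2 * dotv (res k) (res k) <= D (lam k.+1).
Proof.
move=> k_ge1; rewrite -lee_fin fineK ?dualf_fin //.
have sqr_step : beta * (beta * dotv (res k) (res k)) / (2 * beta)
              = beta / 2 * dotv (res k) (res k) by field; rewrite gt_eqF.
have step : lam k.+1 - lam k = beta *: res k by rewrite lam_update // addrAC subrr add0r.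
have := dualf_ge_iterate k (lam k.+1) k_ge1.
rewrite step dotvZl dotvZl dotvZr sqr_step.
by move=> ge; apply: le_trans ge; rewrite lee_fin; lra.
Qed.

Lemma dual_le_iterate k mu : (1 <= k)%N ->
  D mu <= L k + dotv (mu - lam k) (res k).
Proof. by move=> k_ge1; rewrite -lee_fin fineK ?dualf_fin ?dualf_le_iterate. Qed.

Lemma dual_ascent k : (1 <= k)%N ->
  beta / 2 * dotv (res k) (res k) <= D (lam k.+1) - D (lam k) + eta k.
Proof.
move=> k_ge1; have := dual_ge_next k k_ge1; have := dual_le_iterate k (lam k) k_ge1.
by rewrite subrr dotv0l; lra.
Qed.

Lemma dual_gap_le_dist_decrease k mu : (1 <= k)%N ->
  D mu - D (lam k.+1) <= (dotv (lam k - mu) (lam k - mu)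
    - dotv (lam k.+1 - mu) (lam k.+1 - mu)) / (2 * beta) + eta k.
Proof.
move=> k_ge1; have := dual_ge_next k k_ge1; have := dual_le_iterate k mu k_ge1.
have -> : lam k.+1 - mu = (lam k - mu) + beta *: res k by rewrite lam_update // addrAC.
rewrite dotv_sqr_update // -dotvNl opprB.
lra.
Qed.

End IALIterates.

Section RealSequences.
Context {R : realType}.
Implicit Types (u v w : nat -> R).

Lemma cvg0_of_bounded_sums u (p : nat) (C : R) : (forall k, 0 <= u k) ->
  (forall N, \sum_(p <= k < N) u k <= C) -> u @ \oo --> 0.
Proof.
move=> u_ge0 sum_le; rewrite -(cvg_shiftn p).
apply: cvg_series_cvg_0; apply: nondecreasing_is_cvgn.
  by apply/nondecreasing_seqP => N; rewrite !seriesEnat /= big_nat_recr //= lerDl.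
exists C => _ [N _ <-]; rewrite seriesEnat /=.
by have := sum_le (N + p)%N; rewrite -{1}(add0n p) big_addn addnK.
Qed.

Lemma bounded_sums_of_cvg u (p : nat) : (forall k, 0 <= u k) ->
  cvg ((\sum_(p <= k < N) u k) @[N --> \oo]) ->
  exists S, forall N, \sum_(p <= k < N) u k <= S.
Proof.
move=> u_ge0 sum_cvg; exists (limn (fun N => \sum_(p <= k < N) u k)) => N.
apply: (nondecreasing_cvgn_le _ sum_cvg); apply/nondecreasing_seqP => M.
case: (leqP p M) => pM; first by rewrite big_nat_recr //= lerDl.
by rewrite !big_geq // ltnW.
Qed.

Lemma cvg0_of_telescoping u v w (S : R) :
  (forall k, 0 <= u k) -> (forall k, 0 <= v k) ->
  (forall N, \sum_(1 <= k < N) w k <= S) ->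
  (forall k, (1 <= k)%N -> u k.+1 <= v k - v k.+1 + w k) -> u @ \oo --> 0.
Proof.
move=> u_ge0 v_ge0 sum_le step; rewrite -cvg_shiftS.
have telescope N : \sum_(1 <= k < N.+1) u k.+1 <= v 1 - v N.+1 + \sum_(1 <= k < N.+1) w k.
  elim: N => [|N IH]; first by rewrite !big_geq // subrr addr0.
  by rewrite !(big_nat_recr N.+1) //=; have := step N.+1 isT; lra.
apply: (@cvg0_of_bounded_sums _ 1 (v 1 + S)) => [k|[|N]]; first exact: u_ge0.
  by rewrite big_geq //; have := sum_le 0; rewrite big_geq //; have := v_ge0 1; lra.
by have := telescope N; have := v_ge0 N.+1; have := sum_le N.+1; lra.
Qed.

Lemma cvg0_of_increment_bound u v w (c : R) : 0 < c -> (forall k, 0 <= u k) ->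
  v @ \oo --> 0 -> w @ \oo --> 0 ->
  (forall k, (1 <= k)%N -> c * u k <= v k - v k.+1 + w k) -> u @ \oo --> 0.
Proof.
move=> c_gt0 u_ge0 v_cvg w_cvg bound.
have v_next : (fun k => v k.+1) @ \oo --> 0 by rewrite cvg_shiftS.
have rhs_cvg : (fun k => c^-1 * (v k - v k.+1 + w k)) @ \oo --> 0.
  by rewrite -(mulr0 c^-1) -[X in _ * X](addr0 0) -[X in _ * (X + _)]subr0;
     apply: cvgM; [exact: cvg_cst | apply: cvgD => //; exact: cvgB].
apply: squeeze_cvgr (cvg_cst 0) rhs_cvg; near=> k.
have k_ge1 : (1 <= k)%N by near: k; exact: nbhs_infty_ge.
by rewrite u_ge0 /= ler_pdivlMl //; exact: bound.
Unshelve. all: by end_near.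
Qed.

End RealSequences.

Theorem theorem1 (R : realType) (m n : nat)
  (A : 'M[R]_(m, n)) (b : 'cV[R]_m)
  (f : 'cV[R]_n -> R) (gradf : 'cV[R]_n -> 'cV[R]_n)
  (g : 'cV[R]_n -> \bar R) (beta : R)
  (Ghat : 'cV[R]_m -> 'cV[R]_n -> 'cV[R]_n)
  (lamstar : 'cV[R]_m)
  (x : nat -> 'cV[R]_n) (lam : nat -> 'cV[R]_m) (eta : nat -> R) :
  convex_fun f ->
  is_gradient f gradf ->
  lipschitz_map gradf ->
  convex_efun g -> proper_efun g -> lsc_efun g -> bounded_dom g ->
  0 < beta ->
  (* Ghat lam is the gradient of hatf(.; lam) *)
  (forall l, is_gradient (hatf f A b beta l) (Ghat l)) ->
  (* lamstar is an optimal solution of the dual problem *)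
  (forall l, (dualf f g A b beta l <= dualf f g A b beta lamstar)%E) ->
  (* IAL framework *)
  (g (x 1%N) < +oo)%E ->
  (forall k, 0 <= eta k) ->
  cvg ((\sum_(1 <= i < N) eta i) @[N --> \oo]) ->
  (forall k, (1 <= k)%N -> forall z,
     ((dotv (Ghat (lam k) (x k.+1)) (x k.+1 - z))%:E + g (x k.+1) - g z
       <= (eta k)%:E)%E) ->
  (forall k, (1 <= k)%N -> lam k.+1 = lam k + beta *: (A *m x k.+1 - b)) ->
  ((fun k => (dualf f g A b beta lamstar - dualf f g A b beta (lam k))%E)
     @ \oo --> 0%E) /\
  ((fun k => enorm (A *m x k.+1 - b)) @ \oo --> 0).
Proof.
move=> f_convex _ _ _ g_proper _ _ beta_gt0 Ghat_grad lamstar_opt _ eta_ge0 eta_sum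
  x_inexact lam_update.
pose D mu := fine (dualf f g A b beta mu).
have dualE mu : dualf f g A b beta mu = (D mu)%:E.
  by rewrite fineK // (dualf_fin f_convex g_proper beta_gt0 Ghat_grad x_inexact).
pose delta k := D lamstar - D (lam k).
have delta_ge0 k : 0 <= delta k by rewrite subr_ge0 -lee_fin -!dualE.
have [S eta_sum_le] := bounded_sums_of_cvg eta 1 eta_ge0 eta_sum.
have delta_cvg : delta @ \oo --> 0.
  apply: (@cvg0_of_telescoping _ _
    (fun k => dotv (lam k - lamstar) (lam k - lamstar) / (2 * beta)) _ S) => //.
    by move=> k; rewrite divr_ge0 ?dotvv_ge0 // mulr_ge0 // ltW.
  move=> k k_ge1; rewrite /delta -mulrBl.
  exact: dual_gap_le_dist_decrease f_convex g_proper beta_gt0 Ghat_grad x_inexact lam_update k _ k_ge1.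
have res_cvg : (fun k => dotv (A *m x k.+1 - b) (A *m x k.+1 - b)) @ \oo --> 0.
  apply: (cvg0_of_increment_bound _ _ _ (beta / 2)) delta_cvg
    (cvg0_of_bounded_sums eta 1 S eta_ge0 eta_sum_le) _ => [|k|k k_ge1].
  - by rewrite divr_gt0.
  - exact: dotvv_ge0.
  have := dual_ascent f_convex g_proper beta_gt0 Ghat_grad x_inexact lam_update k k_ge1.
  by rewrite /delta /D; lra.
split.
  have -> : (fun k => (dualf f g A b beta lamstar - dualf f g A b beta (lam k))%E)
          = fun k => (delta k)%:E by apply: funext => k; rewrite !dualE.
  apply: cvg_EFin => //=; first by near=> k.
by rewrite -sqrtr0; exact: cvg_comp res_cvg (@sqrt_continuous R 0).
Unshelve. all: by end_near.
Qed.
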